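(* Let $\rho_1\in(0,1)$, $\rho_2\in(0,1-\rho_1)$ and let $\eta$ be a sample of $\mu^{\rho_1,\rho_2}$. There are constants $C,c>0$ such that for each interval $I\subseteq\mathbb{Z}$ of length $|I|=\ell$, \[ \mathbb{P}(\exists i\in I:\ \eta(i)=2)\ge1-Ce^{-c\ell}. \]
   Context: $\mu^{\rho_1,\rho_2}$ (queueing construction): let $(a(i))_{i\in\mathbb{Z}}$, $(s(i))_{i\in\mathbb{Z}}$ be independent families of i.i.d. Bernoulli variables with parameters $\rho_1$ and $\rho_1+\rho_2$; $\mathcal{A}_{[i,j]}=\sum_{k=i}^ja(k)$, $\mathcal{S}_{[i,j]}=\sum_{k=i}^js(k)$ (empty sums $0$); $Q_i=\sup_{j\ge i-1}(\mathcal{A}_{[i,j]}-\mathcal{S}_{[i,j]})$; $d(i)=1$ iff $s(i)=1$ and ($a(i)=1$ or $Q_{i+1}\ge1$) (equivalently, each $i$ with $a(i)=1$ is matched to the largest $j\le i$ with $s(j)=1$ not yet matched, and $d=1$ at matched sites). Set $\eta(i)=1$ if $d(i)=1$, $\eta(i)=2$ if $s(i)=1,d(i)=0$, $\eta(i)=+\infty$ if $s(i)=0$; $\mu^{\rho_1,\rho_2}$ is the law of $\eta$ (the translation-invariant stationary measure of the two-species TASEP; value $2$ = second class particle). An interval of length $\ell$ means $I=[u,v]\cap\mathbb{Z}$ with $v-u=\ell$. *)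

From HB Require Import structures.
From mathcomp Require Import all_boot all_order all_algebra.
From mathcomp Require Import all_classical all_reals all_analysis.
Set Implicit Arguments. Unset Strict Implicit. Unset Printing Implicit Defensive.
Import Order.TTheory GRing.Theory Num.Theory.
Local Open Scope classical_set_scope.
Local Open Scope ring_scope.

(* The site-values of the two-species TASEP: 1 (first class), 2 (second
   class), +infinity (hole). *)
Inductive species := First | Second | Hole.

Section Queue.
Context {T : Type}.

Definition segcount (x : int -> T -> bool) (i j : int) (t : T) : nat :=
  if @Order.lt _ int j i then 0%N
  else (\sum_(0 <= k < absz (j - i + 1)%R) (x (i + k%:Z)%R t : nat))%N.

Definition Qlen (R : realType) (a s : int -> T -> bool) (i : int) (t : T)
  : \bar R :=
  ereal_sup [set ((segcount a i j t)%:R - (segcount s i j t)%:R)%:E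
            | j in [set j : int | (i - 1 <= j)%R]].

Definition dep (R : realType) (a s : int -> T -> bool) (i : int) (t : T)
  : Prop :=
  s i t /\ (a i t \/ (1%:E <= Qlen R a s (i + 1) t)%E).

Definition eta_tasep (R : realType) (a s : int -> T -> bool) (i : int) (t : T)
  : species :=
  if pselect (dep R a s i t) then First
  else if s i t then Second else Hole.
End Queue.

Definition joint {T : Type} (a s : int -> T -> bool) (k : int + int) : T -> bool :=
  match k with inl i => a i | inr i => s i end.

Definition mutually_independent_bool {R : realType} {d : measure_display}
  {T : measurableType d} (P : probability T R) {I : eqType}
  (X : I -> T -> bool) : Prop :=
  forall (F : seq I) (b : I -> bool), uniq F ->
    P (\big[setI/setT]_(k <- F) [set t | X k t = b k]) =
    (\prod_(k <- F) P [set t | X k t = b k])%E.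

Definition queue_input {R : realType} {d : measure_display}
  {T : measurableType d} (P : probability T R) (rho1 rho2 : R)
  (a s : int -> T -> bool) : Prop :=
  [/\ forall k, measurable [set t | joint a s k t],
      forall i, P [set t | a i t] = rho1%:E,
      forall i, P [set t | s i t] = (rho1 + rho2)%:E
    & mutually_independent_bool P (joint a s)].

From HB Require Import structures.
From mathcomp Require Import all_boot all_order all_algebra.
From mathcomp Require Import all_classical all_reals all_analysis.
From mathcomp Require Import zify ring lra.
Import Order.TTheory GRing.Theory Num.Theory.
Local Open Scope classical_set_scope.
Local Open Scope ring_scope.
Set Implicit Arguments. Unset Strict Implicit. Unset Printing Implicit Defensive.

(* If the window [u, u + L] contains no second class particle, every service
   s(i) = 1 in it is matched: either a(i) = 1, or Q_{i+1} >= 1, i.e. some block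
   [i + 1, i + m] carries more arrivals than services.  Chaining these blocks
   from u yields some N > L with S_[u, u+N) <= A_[u, u+N).  Services have the
   larger rate rho1 + rho2 > rho1, so an exponential Chernoff bound gives
   P(S_[u, u+N) <= A_[u, u+N)) <= r^N for some r < 1, and summing over N > L
   bounds the probability of no second class particle by r^L / (1 - r). *)

Definition wcount (f : int -> bool) (i : int) (n : nat) : nat :=
  (\sum_(0 <= k < n) (f (i + k%:Z)%R : nat))%N.

Lemma wcount0 f i : wcount f i 0 = 0%N.
Proof. by rewrite /wcount big_geq. Qed.

Lemma wcount1 f i : wcount f i 1 = f i.
Proof. by rewrite /wcount big_nat1 addr0. Qed.

Lemma wcountD f i n m : wcount f i (n + m) = (wcount f i n + wcount f (i + n%:Z) m)%N.
Proof.
rewrite /wcount (@big_cat_nat _ _ _ n) ?leq_addr //=; congr (_ + _)%N.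
rewrite -{1}(add0n n) big_addn addKn; apply: eq_bigr => k _.
by rewrite PoszD addrA addrAC.
Qed.

Lemma wcountS f i n : wcount f i n.+1 = (f i + wcount f (i + 1) n)%N.
Proof. by rewrite -add1n wcountD wcount1. Qed.

Lemma eq_wcount f g i n : (forall k, (k < n)%N -> f (i + k%:Z) = g (i + k%:Z)) ->
  wcount f i n = wcount g i n.
Proof. by move=> fg; apply: eq_big_nat => k /andP[_ /fg ->]. Qed.

Lemma segcount_wcount {T} (x : int -> T -> bool) (i j : int) t : i - 1 <= j ->
  segcount x i j t = wcount (x^~ t) i `|j - i + 1|.
Proof.
rewrite /segcount; case: ifP => // ji ij.
have -> : j - i + 1 = 0 by lia.
by rewrite wcount0.
Qed.

Lemma wcount_chain (a s : int -> bool) (u : int) (L : nat) :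
  (forall n : nat, (n <= L)%N -> s (u + n%:Z) ->
     exists2 m, (0 < m)%N & (wcount s (u + n%:Z) m <= wcount a (u + n%:Z) m)%N) ->
  exists2 N, (L < N)%N & (wcount s u N <= wcount a u N)%N.
Proof.
move=> block.
suff ext k n : (L.+1 - n <= k)%N -> (wcount s u n <= wcount a u n)%N ->
    exists2 N, (L < N)%N & (wcount s u N <= wcount a u N)%N.
  by apply: (ext L.+1 0%N); rewrite ?subn0 ?wcount0.
elim: k n => [|k IH] n nk balanced; first by exists n => //; lia.
have [Ln|nL] := ltnP L n; first by exists n.
case sn: (s (u + n%:Z)).
- have [m m0 bm] := block n nL sn.
  by apply: (IH (n + m)%N); [lia | rewrite wcountD [X in (_ <= X)%N]wcountD leq_add].
- apply: (IH n.+1); first lia.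
  by rewrite -addn1 wcountD [X in (_ <= X)%N]wcountD !wcount1 sn leq_add.
Qed.

Lemma Qlen_ge1P (R : realType) {T} (a s : int -> T -> bool) (i : int) t :
  (1 <= Qlen R a s (i + 1) t)%E <->
  exists m, (wcount (s^~ t) (i + 1) m < wcount (a^~ t) (i + 1) m)%N.
Proof.
rewrite /Qlen; split.
- move=> Q1.
  (* The values in the supremum are integers, so exceeding 1/2 means being positive. *)
  have half_lt1 : ((2^-1)%:E < (1 : \bar R))%E by rewrite lte_fin; lra.
  have [_ [j /= ij <-]] := ereal_sup_gt (lt_le_trans half_lt1 Q1).
  rewrite lte_fin !segcount_wcount // => gt_half.
  exists (absz (j - (i + 1) + 1)).
  by rewrite -(ltr_nat R) -subr_gt0 (lt_trans _ gt_half) // invr_gt0.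
- move=> [m lt_m]; apply: le_trans (ereal_sup_ubound _); last first.
    by exists (i + m%:Z); [rewrite /=; lia | reflexivity].
  rewrite lee_fin !segcount_wcount; try lia.
  have -> : absz (i + m%:Z - (i + 1) + 1) = m by lia.
  by rewrite lerBrDr addrC natr1 ler_nat.
Qed.

Lemma eta_tasep_SecondP (R : realType) {T} (a s : int -> T -> bool) (i : int) t :
  eta_tasep R a s i t = Second <->
  [/\ s i t, ~~ a i t &
      forall m, (wcount (a^~ t) (i + 1) m <= wcount (s^~ t) (i + 1) m)%N].
Proof.
rewrite /eta_tasep; case: pselect => [[si [ai|/Qlen_ge1P[m lt_m]]]|not_dep] /=.
- by split => // -[_]; rewrite ai.
- by split => // -[_ _ /(_ m)]; rewrite leqNgt lt_m.
- case si: (s i t); last by split => // -[].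
  split => // _; split => //.
  + by apply/negP => ai; apply: not_dep; split; [|left].
  + move=> m; rewrite leqNgt; apply/negP => lt_m.
    by apply: not_dep; split; last by right; apply/Qlen_ge1P; exists m.
Qed.

Lemma no_second_balance (R : realType) {T} (a s : int -> T -> bool) (u : int) (L : nat) t :
  ~ (exists i, u <= i <= u + L%:Z /\ eta_tasep R a s i t = Second) ->
  exists2 N, (L < N)%N & (wcount (s^~ t) u N <= wcount (a^~ t) u N)%N.
Proof.
move=> no_second; apply: wcount_chain => n nL sn.
have not_second : ~ eta_tasep R a s (u + n%:Z) t = Second.
  by move=> second; apply: no_second; exists (u + n%:Z); split => //; lia.
case an: (a (u + n%:Z) t); first by exists 1%N; rewrite // !wcount1 /= an leq_b1.
pose excess m := (wcount (s^~ t) (u + n%:Z + 1) m < wcount (a^~ t) (u + n%:Z + 1) m)%N.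
have [[m lt_m]|never] := pselect (exists m, excess m).
  by exists m.+1; rewrite // !wcountS /= sn an.
exfalso; apply/not_second/eta_tasep_SecondP; split; rewrite ?an //.
by move=> m; rewrite leqNgt; apply/negP => lt_m; apply: never; exists m.
Qed.

Lemma eta_with_notin (I : eqType) (U : Type) (c : I -> U) k b (H : seq I) :
  k \notin H -> {in H, [eta c with k |-> b] =1 c}.
Proof. by move=> kH j jH /=; case: eqP jH kH => // -> ->. Qed.

Definition determined_by (I : eqType) (F : seq I) (phi : (I -> bool) -> Prop) : Prop :=
  forall y y', {in F, y =1 y'} -> phi y -> phi y'.

Section IndependentBits.
Context (R : realType) (d : measure_display) (T : measurableType d)
  (P : probability T R) (I : eqType) (X : I -> T -> bool) (p : I -> bool -> R).
Hypothesis measurable_X : forall k, measurable [set t | X k t].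
Hypothesis indep_X : mutually_independent_bool P X.
Hypothesis P_X : forall k b, P [set t | X k t = b] = (p k b)%:E.

Definition cylinder (H : seq I) (c : I -> bool) : set T :=
  \big[setI/setT]_(k <- H) [set t | X k t = c k].

Lemma p_ge0 k b : 0 <= p k b.
Proof. by rewrite -lee_fin -P_X measure_ge0. Qed.

Lemma measurable_Xeq k b : measurable [set t | X k t = b].
Proof.
case: b; first exact: measurable_X.
rewrite (_ : [set t | X k t = false] = ~` [set t | X k t]).
  exact/measurableC/measurable_X.
by apply/seteqP; split => t /=; case: (X k t).
Qed.

Lemma cylinderP H c t : cylinder H c t <-> {in H, X^~ t =1 c}.
Proof.
elim: H => [|k H IH]; rewrite /cylinder ?big_nil ?big_cons -/(cylinder _ _).
  by split=> // _ j; rewrite in_nil.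
split=> [[Xk /IH XH] j|XkH].
  by rewrite in_cons => /predU1P[->|/XH].
split; first exact/XkH/mem_head.
by apply/IH => j jH; apply: XkH; rewrite in_cons jH orbT.
Qed.

Lemma measurable_cylinder H c : measurable (cylinder H c).
Proof.
elim: H => [|k H IH]; rewrite /cylinder ?big_nil ?big_cons; first exact: measurableT.
exact: measurableI (measurable_Xeq _ _) IH.
Qed.

Lemma P_cylinder H c : uniq H -> P (cylinder H c) = (\prod_(k <- H) p k (c k))%:E.
Proof.
by move=> uH; rewrite /cylinder indep_X // -prodEFin; apply: eq_bigr => k _.
Qed.

Lemma measurable_determined F phi : determined_by F phi -> measurable [set t | phi (X^~ t)].
Proof.
elim: F phi => [|k F IH] phi phiF.
  have phi_const y : phi y -> phi (fun=> false) by apply: phiF.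
  case: (pselect (phi (fun=> false))) => [phi0|nphi0].
    rewrite (_ : [set t | _] = setT) //.
    by apply/seteqP; split => t // _; apply: phiF phi0.
  by rewrite (_ : [set t | _] = set0) //; apply/seteqP; split => t // /phi_const.
pose phi_with b y := phi [eta y with k |-> b].
have phi_withF b : determined_by F (phi_with b).
  move=> y y' yy'; apply: phiF => j; rewrite in_cons => /predU1P[->|jF] /=.
    by rewrite eqxx.
  by case: eqP => // _; apply: yy'.
rewrite (_ : [set t | phi (X^~ t)] =
   ([set t | X k t = true] `&` [set t | phi_with true (X^~ t)]) `|`
   ([set t | X k t = false] `&` [set t | phi_with false (X^~ t)])).
  by apply: measurableU; apply: measurableI;
    solve [exact: measurable_Xeq | exact: IH].
apply/seteqP; split => t /=.
  move=> phit; case Xk: (X k t); [left|right]; split => //;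
    by apply: phiF phit => j _ /=; case: eqP => // ->; rewrite Xk.
by move=> [][Xk]; apply: phiF => j _ /=; case: eqP => // ->; rewrite Xk.
Qed.

Lemma cylinder_cons k H c b : k \notin H ->
  cylinder (k :: H) [eta c with k |-> b] = [set t | X k t = b] `&` cylinder H c.
Proof.
move=> kH; rewrite /cylinder big_cons; congr (_ `&` _); first by rewrite /= eqxx.
by apply: eq_big_seq => j jH; rewrite (eta_with_notin _ _ kH jH).
Qed.

Lemma P_split_cylinder (A : set T) k H c : measurable A -> k \notin H ->
  P (A `&` cylinder H c) =
  (P (A `&` cylinder (k :: H) [eta c with k |-> true]) +
   P (A `&` cylinder (k :: H) [eta c with k |-> false]))%E.
Proof.
move=> mA kH; have mAX b : measurable (A `&` ([set t | X k t = b] `&` cylinder H c)).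
  by apply: measurableI mA _; apply: measurableI;
    [exact: measurable_Xeq | exact: measurable_cylinder].
rewrite !cylinder_cons // -measureU; try exact: mAX.
- congr (P _); apply/seteqP; split => t /=.
    by move=> [At Ct]; case Xk: (X k t); [left|right].
  by move=> [][At [_ Ct]].
- by apply/seteqP; split => t // [[_ [/= -> _]] [_ []]].
Qed.

Lemma markov_cylinder (A : set T) H c lam : measurable A -> uniq H -> 0 <= lam ->
  (forall t, A t -> cylinder H c t -> 1 <= lam) ->
  (P (A `&` cylinder H c) <= (lam * \prod_(k <- H) p k (c k))%:E)%E.
Proof.
move=> mA uH lam_ge0 lam_ge1.
have prod_ge0 : 0 <= \prod_(k <- H) p k (c k) by apply: prodr_ge0 => k _; exact: p_ge0.
have [lam1|lam_lt1] := leP 1 lam.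
  have P_le : (P (A `&` cylinder H c) <= P (cylinder H c))%E.
    apply: le_measure; rewrite ?inE; last exact: subIsetr.
      exact: measurableI mA (measurable_cylinder _ _).
    exact: measurable_cylinder.
  by apply: le_trans P_le _; rewrite P_cylinder // lee_fin ler_peMl.
rewrite (_ : A `&` _ = set0) ?measure0 ?lee_fin ?mulr_ge0 //.
by apply/seteqP; split => t // [At Ct]; have := lam_ge1 t At Ct; rewrite leNgt lam_lt1.
Qed.

(* Markov's inequality for the weight \prod_(k <- F) w k (X k), with the
   expectation computed one coordinate at a time by conditioning on X k. *)
Lemma markov_product_weight (phi : (I -> bool) -> Prop) (w : I -> bool -> R) :
  measurable [set t | phi (X^~ t)] -> (forall k b, 0 <= w k b) ->
  forall F H c lam, 0 <= lam -> uniq (F ++ H) ->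
  (forall y, {in H, y =1 c} -> phi y -> 1 <= lam * \prod_(k <- F) w k (y k)) ->
  (P ([set t | phi (X^~ t)] `&` cylinder H c) <=
   (lam * \prod_(k <- F) (w k true * p k true + w k false * p k false)
        * \prod_(k <- H) p k (c k))%:E)%E.
Proof.
move=> mphi w_ge0; elim=> [|k F IH] H c lam lam_ge0 uFH weight_ge1.
  rewrite big_nil mulr1; apply: markov_cylinder => // t phit /cylinderP Ht.
  by have := weight_ge1 _ Ht phit; rewrite big_nil mulr1.
move: uFH; rewrite cat_cons cons_uniq mem_cat negb_or => /andP[/andP[kF kH] uFH].
have uFkH : uniq (F ++ k :: H) by rewrite -cat1s uniq_catCA /= mem_cat negb_or kF kH.
have prod_with b : \prod_(j <- k :: H) p j ([eta c with k |-> b] j) =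
    p k b * \prod_(j <- H) p j (c j).
  rewrite big_cons; congr (_ * _); first by rewrite /= eqxx.
  by apply: eq_big_seq => j /(eta_with_notin c b kH) ->.
have IHb b : (P ([set t | phi (X^~ t)] `&` cylinder (k :: H) [eta c with k |-> b]) <=
    (lam * w k b * \prod_(j <- F) (w j true * p j true + w j false * p j false)
       * (p k b * \prod_(j <- H) p j (c j)))%:E)%E.
  rewrite -prod_with; apply: IH => [|//|y yc phiy]; first exact: mulr_ge0.
  have yH : {in H, y =1 c}.
    by move=> j jH; rewrite yc ?(eta_with_notin c b kH) // in_cons jH orbT.
  have := weight_ge1 y yH phiy.
  by rewrite big_cons (yc k (mem_head _ _)) /= eqxx mulrA.
rewrite (P_split_cylinder c mphi kH); apply: le_trans (leeD (IHb true) (IHb false)) _.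
by rewrite -EFinD lee_fin big_cons le_eqVlt; apply/orP; left; apply/eqP; ring.
Qed.
End IndependentBits.

Definition window (u : int) (n : nat) : seq (int + int) :=
  [seq inl (u + k%:Z) | k <- index_iota 0 n] ++ [seq inr (u + k%:Z) | k <- index_iota 0 n].

Lemma window_uniq u n : uniq (window u n).
Proof.
have shift_inj : injective (fun k : nat => u + k%:Z) by move=> x y /addrI [].
rewrite cat_uniq; apply/and3P; split.
- by rewrite map_inj_uniq ?iota_uniq // => x y [] /shift_inj.
- by apply/hasPn => x /mapP[k _ ->]; apply/mapP => -[].
- by rewrite map_inj_uniq ?iota_uniq // => x y [] /shift_inj.
Qed.

Definition window_event (r : rel nat) (u : int) (n : nat) (y : int + int -> bool) : Prop :=
  r (wcount (y \o inr) u n) (wcount (y \o inl) u n).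

Lemma window_event_determined r u n : determined_by (window u n) (window_event r u n).
Proof.
move=> y y' yy'.
have [yl yr] : (forall k, (k < n)%N -> y (inl (u + k%:Z)) = y' (inl (u + k%:Z))) /\
               (forall k, (k < n)%N -> y (inr (u + k%:Z)) = y' (inr (u + k%:Z))).
  by split=> k kn; apply: yy'; rewrite mem_cat map_f ?orbT // mem_index_iota.
by rewrite /window_event (@eq_wcount (y \o inl) (y' \o inl) _ _ yl)
  (@eq_wcount (y \o inr) (y' \o inr) _ _ yr).
Qed.

Definition tilt (R : realType) (t : R) (k : int + int) (b : bool) : R :=
  (if k is inl _ then t^-1 else t) ^+ b.

Lemma tilt_balance_ge1 (R : realType) (t : R) u n y : 0 < t <= 1 ->
  window_event leq u n y -> 1 <= \prod_(k <- window u n) tilt t k (y k).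
Proof.
move=> /andP[t_gt0 t_le1] balanced.
rewrite big_cat !big_map /= !prodrXr.
suff tilt_ge1 S A : (S <= A)%N -> 1 <= t^-1 ^+ A * t ^+ S by exact: tilt_ge1.
move=> SA; have tA_neq0 : t ^+ A != 0 by rewrite expf_neq0 // gt_eqF.
rewrite -[leLHS](mulVf tA_neq0) -exprVn.
apply: ler_wpM2l; first by rewrite exprn_ge0 // invr_ge0 ltW.
by apply: ler_wiXn2l => //; exact: ltW.
Qed.

Lemma nneseries_geometric_le (R : realType) (r : R) (M : nat) : 0 < r < 1 ->
  (\sum_(0 <= n <oo) (r ^+ (M + n))%:E <= (r ^+ M / (1 - r))%:E)%E.
Proof.
move=> /andP[r_gt0 r_lt1].
apply: lime_le.
  by apply: is_cvg_nneseries => n _ _; rewrite lee_fin exprn_ge0 // ltW.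
apply: nearW => n; rewrite sumEFin lee_fin.
have -> : \sum_(0 <= i < n) r ^+ (M + i) = series (geometric (r ^+ M) r) n.
  by rewrite /series /=; apply: eq_bigr => i _; rewrite exprD.
by apply: geometric_le_lim; rewrite ?exprn_ge0 ?ger0_norm // ltW.
Qed.

Definition site_rate (R : realType) (rho1 rho2 : R) (k : int + int) : R :=
  if k is inl _ then rho1 else rho1 + rho2.

Definition bit_prob (R : realType) (q : R) (b : bool) : R := if b then q else 1 - q.

(* E[t^(s(i) - a(i))], the one-site factor of the exponential moment. *)
Definition chernoff_rate (R : realType) (rho1 rho2 t : R) : R :=
  (t^-1 * rho1 + (1 - rho1)) * (t * (rho1 + rho2) + (1 - (rho1 + rho2))).

Section QueueInput.
Context (R : realType) (rho1 rho2 : R) (d : measure_display) (T : measurableType d)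
  (P : probability T R) (a s : int -> T -> bool).
Hypothesis input : queue_input P rho1 rho2 a s.

Let measurable_joint k : measurable [set t | joint a s k t].
Proof. by case: input. Qed.

Let indep_joint : mutually_independent_bool P (joint a s).
Proof. by case: input. Qed.

Lemma P_joint k b : P [set t | joint a s k t = b] = (bit_prob (site_rate rho1 rho2 k) b)%:E.
Proof.
case: input => _ Pa Ps _; case: b; first by case: k => i /=; [exact: Pa | exact: Ps].
rewrite (_ : [set t | joint a s k t = false] = ~` [set t | joint a s k t]).
  by rewrite probability_setC // EFinB; case: k => i /=; rewrite ?Pa ?Ps.
by apply/seteqP; split => t /=; case: joint.
Qed.

Lemma measurable_window_event r u n :
  measurable [set t | window_event r u n (joint a s ^~ t)].
Proof. apply: (measurable_determined measurable_joint); exact: window_event_determined. Qed.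

Lemma P_balanced_window_le t u n : 0 < t <= 1 ->
  (P [set t' | window_event leq u n (joint a s ^~ t')] <=
   (chernoff_rate rho1 rho2 t ^+ n)%:E)%E.
Proof.
move=> t01; have /andP[t_gt0 _] := t01.
have tilt_ge0 k b : 0 <= tilt t k b by case: k => i; rewrite exprn_ge0 // ?invr_ge0 ltW.
have weight_ge1 y : {in [::], y =1 fun=> true} -> window_event leq u n y ->
    1 <= 1 * \prod_(k <- window u n) tilt t k (y k).
  by move=> _; rewrite mul1r; exact: tilt_balance_ge1.
have uniq_window : uniq (window u n ++ [::]) by rewrite cats0 window_uniq.
have := markov_product_weight measurable_joint indep_joint P_joint
  (measurable_window_event leq u n) tilt_ge0 ler01 uniq_window weight_ge1.
rewrite /cylinder !big_nil setIT mulr1 mul1r => /le_trans; apply.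
rewrite lee_fin /window big_cat !big_map /tilt /= !prodr_const_nat subn0 -exprMn.
by rewrite !expr1 !expr0 !mul1r.
Qed.

Lemma Second_setE i : [set t | eta_tasep R a s i t = Second] =
  [set t | s i t] `&` ~` [set t | a i t] `&`
  ~` \bigcup_m [set t | window_event ltn (i + 1) m (joint a s ^~ t)].
Proof.
apply/seteqP; split => t /=.
  move=> /eta_tasep_SecondP[si ai never]; split; first by split=> //; exact/negP.
  by move=> [m _]; apply/negP; rewrite -leqNgt; exact: never.
move=> [[si /negP ai] none]; apply/eta_tasep_SecondP; split => // m.
by rewrite leqNgt; apply/negP => lt_m; apply: none; exists m.
Qed.

Lemma measurable_Second_in u (L : nat) :
  measurable [set t | exists i, u <= i <= u + L%:Z /\ eta_tasep R a s i t = Second].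
Proof.
rewrite (_ : [set t | _] = \bigcup_(n in [set n | (n <= L)%N])
                             [set t | eta_tasep R a s (u + n%:Z) t = Second]).
  apply: bigcup_measurable => n _; rewrite Second_setE.
  apply: measurableI; first apply: measurableI.
  - exact: (measurable_joint (inr _)).
  - exact/measurableC/(measurable_joint (inl _)).
  - apply/measurableC/bigcupT_measurable => m; exact: measurable_window_event.
apply/seteqP; split => t /=.
  move=> [i [ui Si]]; exists (absz (i - u)); first by rewrite /=; lia.
  by rewrite /= (_ : u + _ = i) //; lia.
by move=> [n nL Sn]; exists (u + n%:Z); split => //; rewrite /= in nL; lia.
Qed.

Lemma P_Second_in_ge t (u : int) (L : nat) (r := chernoff_rate rho1 rho2 t) :
  0 < t <= 1 -> 0 < r < 1 ->
  ((1 - r ^+ L / (1 - r))%:E <=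
   P [set t' | exists i, (u <= i <= u + L%:Z)%R /\ eta_tasep R a s i t' = Second])%E.
Proof.
move=> t01 r01; have /andP[r_gt0 r_lt1] := r01.
set E := [set t' | _]; have mE : measurable E := measurable_Second_in u L.
pose B n := [set t' | window_event leq u (L.+1 + n) (joint a s ^~ t')].
have cover : ~` E `<=` \bigcup_n B n.
  move=> t' notE; have [N LN balanced] := no_second_balance notE.
  by exists (N - L.+1)%N; rewrite // /B /= subnKC.
have no_second_le : (P (~` E) <= (r ^+ L / (1 - r))%:E)%E.
  apply: le_trans (measure_sigma_subadditive P (fun n => measurable_window_event leq u _)
    (measurableC mE) cover) _.
  apply: (@le_trans _ _ (\sum_(0 <= n <oo) (r ^+ (L.+1 + n))%:E)%E).
    apply: lee_nneseries => [n _ _|n _]; first exact: measure_ge0.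
    exact: P_balanced_window_le.
  apply: le_trans (nneseries_geometric_le _ r01) _.
  rewrite lee_fin; apply: ler_wpM2r; first by rewrite invr_ge0 subr_ge0 ltW.
  by apply: ler_wiXn2l => //; exact: ltW.
rewrite -(setCK E) probability_setC; last exact: measurableC.
by rewrite EFinB leeB.
Qed.
End QueueInput.

(* The rate equals 1 at t = 1 with derivative rho2 > 0 there, so it drops below
   1 just left of 1; t = 1 - rho2 / 2 is an explicit such point. *)
Lemma chernoff_rate_lt1 (R : realType) (rho1 rho2 : R) :
  0 < rho1 -> 0 < rho2 -> rho1 + rho2 < 1 ->
  0 < chernoff_rate rho1 rho2 (1 - rho2 / 2) < 1.
Proof.
move=> rho1_gt0 rho2_gt0 rho_lt1; set t := 1 - rho2 / 2.
have t_gt0 : 0 < t by rewrite /t; lra.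
have factored : chernoff_rate rho1 rho2 t * t =
    (rho1 + t * (1 - rho1)) * (t * (rho1 + rho2) + (1 - (rho1 + rho2))).
  by rewrite /chernoff_rate; field; rewrite gt_eqF.
apply/andP; split; last by rewrite -(ltr_pM2r t_gt0) mul1r factored /t; nra.
by rewrite -(pmulr_lgt0 _ t_gt0) factored; apply: mulr_gt0; nra.
Qed.

Theorem lemma3p2 (R : realType) (rho1 rho2 : R) :
  0 < rho1 < 1 -> 0 < rho2 < 1 - rho1 ->
  exists C c : R, 0 < C /\ 0 < c /\
    forall (d : measure_display) (T : measurableType d)
           (P : probability T R) (a s : int -> T -> bool),
      queue_input P rho1 rho2 a s ->
      forall u v : int, u <= v ->
        ((1 - C * expR (- c * (v - u)%:~R))%:E <=
         P [set t | exists i : int, (u <= i <= v)%R /\ eta_tasep R a s i t = Second])%E.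
Proof.
move=> /andP[rho1_gt0 _] /andP[rho2_gt0 rho2_lt].
have t01 : 0 < 1 - rho2 / 2 <= 1 by apply/andP; split; lra.
have rho_lt1 : rho1 + rho2 < 1 by lra.
have r01 := chernoff_rate_lt1 rho1_gt0 rho2_gt0 rho_lt1.
set r := chernoff_rate _ _ _ in r01; have /andP[r_gt0 r_lt1] := r01.
exists (1 - r)^-1, (- ln r); split; first by rewrite invr_gt0 subr_gt0.
split; first by rewrite oppr_gt0 ln_lt0 // r01.
move=> d T P a s input u v uv.
have [L ->] : exists L : nat, v = u + L%:Z by exists (absz (v - u)); lia.
have -> : (1 - r)^-1 * expR (- - ln r * (u + L%:Z - u)%:~R) = r ^+ L / (1 - r).
  by rewrite opprK (addrC u) addrK -[(L%:Z)%:~R]/(L%:R) expRM_natr lnK ?posrE // mulrC.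
exact: P_Second_in_ge.
Qed.
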